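(* Let $T$ be a tree such that the longest $2$-path in $T$ has length $d\ge1$, and let $k$ be a positive integer. Then there exists $L>0$ (depending only on $k$ and $d$) such that the following holds: if $T$ contains a $\mathrm{C}$-gadget of order $d$ and length $L$, then there exists $1\le d'\le d$ such that $T$ contains a strong $\mathrm{C}$-gadget of order $d'$ with at least $k$ junctions.
   Context: In a tree $T$: a $2$-path of length $a$ is a path $x_0,\dots,x_a$ with $\deg(x_0)\ne2$, $\deg(x_1)=\dots=\deg(x_{a-1})=2$, $\deg(x_a)\ne 2$. A source is a vertex of degree $>2$. A ray of length $a$ is a $2$-path $x_0,\dots,x_a$ with $\deg(x_0)>2$ and $\deg(x_a)=1$; $x_0$ is its source. A $\mathrm{C}$-gadget of order $d$ and length $k$ is a path $x_0,\dots,x_k$ in $T$ such that each inner vertex $x_i$ either has degree $2$ or is a source such that every neighbour of $x_i$ other than $x_{i-1},x_{i+1}$ is contained in a ray of length at most $d$ from $x_i$ to a leaf. A $\mathrm{C}$-gadget $x_0,\dots,x_L$ of order $d$ is a strong $\mathrm{C}$-gadget with $k$ junctions if there are integers $0=i_0<i_1<\dots<i_k<i_{k+1}=L$ such that (I) $i_{j+1}-i_j>2d$ for all $j\in\{0,\dots,k\}$, and (II) for all $j\in\{1,\dots,k\}$, $x_{i_j}$ is the source of a ray of length $d$ containing neither $x_{i_j-1}$ nor $x_{i_j+1}$; the vertices $x_{i_1},\dots,x_{i_k}$ are the junctions. *)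

(* finite simple graphs as symmetric irreflexive relations on a finType. *)
From mathcomp Require Import all_boot.
Set Implicit Arguments. Unset Strict Implicit. Unset Printing Implicit Defensive.

Section Trees.
Variables (V : finType) (e : rel V).

Definition deg (x : V) : nat := #|[set y | e x y]|.

Definition simple_graph : Prop := symmetric e /\ irreflexive e.

Definition has_cycle : Prop :=
  exists c : seq V, [/\ 3 <= size c, uniq c & cycle e c].

Definition is_tree : Prop :=
  [/\ simple_graph, (forall x y : V, connect e x y) & ~ has_cycle].

(* A path x_0, x_1, ..., x_a is represented by its head x = x_0 and tail p,
   so that x_i = nth x (x :: p) i and its length is a = size p. *)
Definition is_gpath (x : V) (p : seq V) : bool := uniq (x :: p) && path e x p.

Definition vx (x : V) (p : seq V) (i : nat) : V := nth x (x :: p) i.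

Definition two_path (x : V) (p : seq V) : Prop :=
  [/\ is_gpath x p, 1 <= size p, deg x != 2, deg (last x p) != 2 &
      forall i, 0 < i < size p -> deg (vx x p i) = 2].

Definition longest_two_path (d : nat) : Prop :=
  (exists x p, two_path x p /\ size p = d) /\
  (forall x p, two_path x p -> size p <= d).

Definition source (x : V) : bool := 2 < deg x.

Definition ray (x : V) (p : seq V) : Prop :=
  [/\ two_path x p, source x & deg (last x p) = 1].

Definition C_gadget (d : nat) (x : V) (p : seq V) : Prop :=
  is_gpath x p /\
  forall i, 0 < i < size p ->
    deg (vx x p i) = 2 \/
    (source (vx x p i) /\
     forall y, e (vx x p i) y -> y != vx x p i.-1 -> y != vx x p i.+1 ->
       exists q, [/\ ray (vx x p i) q, size q <= d & y \in q]).

Definition strong_C_gadget (d k : nat) (x : V) (p : seq V) : Prop :=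
  C_gadget d x p /\
  exists ii : nat -> nat,
    [/\ ii 0 = 0, ii k.+1 = size p,
        (forall j, j <= k -> ii j + 2 * d < ii j.+1) &
        (forall j, 1 <= j <= k ->
           exists q, [/\ ray (vx x p (ii j)) q, size q = d,
                         vx x p (ii j).-1 \notin q & vx x p (ii j).+1 \notin q])].

End Trees.

From mathcomp Require Import all_boot zify.
From Stdlib Require Import Classical.
Set Implicit Arguments. Unset Strict Implicit. Unset Printing Implicit Defensive.

(* Induction on the order D.  A C-gadget of order 0 has only degree-2 inner
   vertices, so it extends to a 2-path and its length is at most d.  For order
   D + 1, cut the gadget into k blocks, each a window flanked by margins longer
   than 2 (D + 1).  If every window contains a junction of order D + 1, these k
   junctions are far enough apart to form a strong C-gadget.  Otherwise some
   window contains none; since in a tree a ray through a side neighbour of the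
   path never meets the path again, every side ray in that window is shorter
   than D + 1, so the window is a C-gadget of order D and induction applies. *)

Lemma fin_choice_nat (P : nat -> nat -> Prop) k :
  (forall j, j < k -> exists i, P j i) -> exists f, forall j, j < k -> P j (f j).
Proof.
elim: k => [|k IH] h; first by exists (fun _ => 0).
have [f hf] := IH (fun j hj => h j (leqW hj)).
have [i0 hi0] := h k (ltnSn k).
exists (fun j => if j == k then i0 else f j) => j hj.
by case: eqVneq => [-> | ne] //; apply: hf; lia.
Qed.

Section Paths.
Variables (V : finType) (e : rel V).

Lemma gpath_adj (x : V) p i :
  is_gpath e x p -> i < size p -> e (vx x p i) (vx x p i.+1).
Proof. by case/andP => _ /(pathP x) adj /adj. Qed.

Lemma gpath_size (x : V) p : is_gpath e x p -> size p < #|V|.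
Proof. by case/andP => u _; have := max_card (mem (x :: p)); rewrite (card_uniqP u). Qed.

Lemma deg_avoid (v : V) (s : seq V) : size s < deg e v -> exists2 y, e v y & y \notin s.
Proof.
move=> lt_s; have : ~~ ([set y | e v y] \subset [set y in s]).
  apply: contraTN lt_s => /subset_leq_card le; rewrite -leqNgt.
  by apply: leq_trans le _; rewrite cardsE card_size.
by case/subsetPn => y; rewrite !inE; exists y.
Qed.

Lemma vx_cons (z x : V) p i : i <= size p -> vx z (x :: p) i.+1 = vx x p i.
Proof. by move=> le_ip; apply: set_nth_default. Qed.

Lemma vx_rev (x : V) p i : i <= size p ->
  vx (last x p) (rev (belast x p)) i = vx x p (size p - i).
Proof.
move=> le_ip; rewrite /vx -rev_rcons -lastI nth_rev /=; last by rewrite ltnS.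
rewrite subSS.
by apply: set_nth_default; rewrite /= ltnS leq_subr.
Qed.

Lemma vx_cons_take_drop (x : V) p a M : a <= size p ->
  vx x p a :: take M (drop a p) = take M.+1 (drop a (x :: p)).
Proof. by move=> le_ap; rewrite [drop a (x :: p)](drop_nth x). Qed.

Lemma size_take_drop (T : Type) (s : seq T) a M :
  a + M <= size s -> size (take M (drop a s)) = M.
Proof. by move=> le; rewrite size_take size_drop; case: ltnP => //; lia. Qed.

Lemma vx_take_drop (x : V) p a M i : a + M <= size p -> i <= M ->
  vx (vx x p a) (take M (drop a p)) i = vx x p (a + i).
Proof.
move=> le_aM le_iM; rewrite [vx (vx x p a) _ i]/vx vx_cons_take_drop; last lia.
rewrite nth_take ?ltnS // nth_drop; apply: set_nth_default => /=; lia.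
Qed.

Lemma gpath_take_drop (x : V) p a M : is_gpath e x p -> a <= size p ->
  is_gpath e (vx x p a) (take M (drop a p)).
Proof.
move=> /andP [u pth] le_ap.
rewrite /is_gpath -[path _ _ _]/(sorted e (vx x p a :: _)) vx_cons_take_drop //.
by rewrite take_uniq ?drop_uniq // take_sorted ?drop_sorted.
Qed.

Definition junction D (x : V) p i :=
  exists q, [/\ ray e (vx x p i) q, size q = D,
                vx x p i.-1 \notin q & vx x p i.+1 \notin q].

Definition deg2_path (x : V) p :=
  [/\ is_gpath e x p, 0 < size p & forall i, 0 < i < size p -> deg e (vx x p i) = 2].

Lemma C_gadget0_deg2_path (x : V) p : C_gadget e 0 x p -> 0 < size p -> deg2_path x p.
Proof.
case=> g side p0; split => // i hi.
case: (side i hi) => // [[src rays]].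
have [y ey] : exists2 y, e (vx x p i) y & y \notin [:: vx x p i.-1; vx x p i.+1].
  exact: deg_avoid.
rewrite !inE negb_or => /andP [y1 y2].
by have [[|? ?] [_ sq yq]] := rays y ey y1 y2.
Qed.

Lemma strong_C_gadget_of_junctions D k g W (x : V) p (f : nat -> nat) :
  C_gadget e D x p -> 0 < k -> 2 * D < g -> size p = k * W ->
  (forall j, j < k ->
     [/\ j * W + g <= f j, f j + g <= j.+1 * W & junction D x p (f j)]) ->
  strong_C_gadget e D k x p.
Proof.
move=> hC k0 gD sizep hf; split => //.
exists (fun j => if j == 0 then 0 else if j <= k then f j.-1 else size p); split => //.
- by rewrite /= ltnn.
- move=> [|j] /= jk; first by rewrite k0; have [lo _ _] := hf 0 k0; lia.
  rewrite jk; have [_ hi _] := hf j jk.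
  case: (ltnP j.+1 k) => [jk' | kj]; first by have [lo _ _] := hf j.+1 jk'; lia.
  by rewrite sizep (_ : k = j.+1); lia.
- by move=> [|j] //= jk; rewrite jk; have [_ _ ?] := hf j jk.
Qed.

End Paths.

(* k blocks, each a window of length [gadget_length k d D'] between two
   margins of length 2 D + 1. *)
Fixpoint gadget_length k d D :=
  if D is D'.+1 then k * (2 * (2 * D + 1) + gadget_length k d D') else d.+1.

Section Trees.
Variables (V : finType) (e : rel V).
Hypothesis tree : is_tree e.

Lemma tree_sym : symmetric e.
Proof. by case: tree => [[]]. Qed.

Lemma tree_irrefl : irreflexive e.
Proof. by case: tree => [[]]. Qed.

Lemma gpath_adj_head (z y : V) q : is_gpath e z q -> e z y -> y \in q -> y = vx z q 1.
Proof.
(* Otherwise z, q_0, ..., y closes a cycle. *)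
case/andP => uq pq ezy /splitPr yq; case: yq uq pq => [[|w q1] q2] // uq pq.
case: tree => _ _ []; exists (z :: w :: rcons q1 y); split.
- by rewrite /= size_rcons.
- by move: uq; rewrite -cat_rcons -cat_cons cat_uniq => /andP [].
- move: pq; rewrite -cat_rcons cat_path => /andP [pw _].
  rewrite -[cycle _ _]/(path e z (rcons (rcons (w :: q1) y) z)).
  by rewrite rcons_path pw last_rcons tree_sym.
Qed.

Lemma deg2_path_rev (x : V) p :
  deg2_path e x p -> deg2_path e (last x p) (rev (belast x p)).
Proof.
case=> /andP [u pth] p0 mid; split.
- rewrite /is_gpath -rev_rcons -lastI rev_uniq u rev_path.
  by rewrite (@eq_path _ _ e) // => a b; rewrite tree_sym.
- by rewrite size_rev size_belast.
- move=> i; rewrite size_rev size_belast => /andP [i0 ip].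
  by rewrite vx_rev ?(ltnW ip) //; apply: mid; lia.
Qed.

Lemma deg2_path_cons (x : V) p :
  deg2_path e x p -> deg e x = 2 -> exists z, deg2_path e z (x :: p).
Proof.
case=> g p0 mid dx.
have [z ezx] : exists2 z, e x z & z \notin [:: vx x p 1] by apply: deg_avoid; rewrite dx.
rewrite inE => z_next.
have zx : z != x by apply: contraTneq ezx => ->; rewrite tree_irrefl.
have zp : z \notin p by apply: contra z_next => /(gpath_adj_head g ezx) ->.
exists z; split => //.
- case/andP: g => u pth.
  by rewrite /is_gpath cons_uniq u inE negb_or zx zp /= pth tree_sym ezx.
- by move=> [|[|i]] //= ip; rewrite vx_cons ?mid //; lia.
Qed.

Lemma deg2_path_extend (x : V) p : deg2_path e x p ->
  exists x' p', two_path e x' p' /\ size p <= size p'.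
Proof.
have [n] := ubnP (#|V| - size p); elim: n x p => // n IH x p lt_n P.
have longer x' p' : deg2_path e x' p' -> size p' = (size p).+1 ->
    exists x'' p'', two_path e x'' p'' /\ size p <= size p''.
  move=> P' sz'; have [g' _ _] := P'; have lt' := gpath_size g'.
  have [x'' [p'' [tp le]]] := IH x' p' ltac:(lia) P'.
  by exists x'', p''; split => //; lia.
case: (eqVneq (deg e x) 2) => [dx | dx].
  by have [z Pz] := deg2_path_cons P dx; exact: longer Pz _.
case: (eqVneq (deg e (last x p)) 2) => [dl | dl].
  have [z Pz] := deg2_path_cons (deg2_path_rev P) dl.
  by apply: longer Pz _; rewrite /= size_rev size_belast.
by case: P => g p0 mid; exists x, p.
Qed.

Lemma C_gadget0_size d (x : V) p :
  longest_two_path e d -> C_gadget e 0 x p -> size p <= d.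
Proof.
move=> [_ longest] hC; case: (posnP (size p)) => [-> // | p0].
have [x' [p' [tp le]]] := deg2_path_extend (C_gadget0_deg2_path hC p0).
exact: leq_trans le (longest _ _ tp).
Qed.

Lemma side_ray_junction D (x : V) p i y q : is_gpath e x p -> 0 < i < size p ->
  e (vx x p i) y -> y != vx x p i.-1 -> y != vx x p i.+1 ->
  ray e (vx x p i) q -> y \in q -> size q = D -> junction e D x p i.
Proof.
move=> g /andP [i0 ip] ey y1 y2 r yq sq.
have [[qg _ _ _ _] _ _] := r.
have y_head := gpath_adj_head qg ey yq.
have e_prev : e (vx x p i) (vx x p i.-1).
  by rewrite tree_sym -{2}(prednK i0); apply: gpath_adj g _; lia.
have e_next : e (vx x p i) (vx x p i.+1) by apply: gpath_adj.
exists q; split => //.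
- by apply: contra y1 => /(gpath_adj_head qg e_prev) ->; rewrite -y_head.
- by apply: contra y2 => /(gpath_adj_head qg e_next) ->; rewrite -y_head.
Qed.

Lemma C_gadget_take_drop D (x : V) p a M :
  C_gadget e D.+1 x p -> a + M <= size p ->
  (forall i, a < i < a + M -> ~ junction e D.+1 x p i) ->
  C_gadget e D (vx x p a) (take M (drop a p)).
Proof.
case=> g side le_aM no_junction; split; first by apply: gpath_take_drop; lia.
rewrite size_take_drop // => i /andP [i0 iM].
rewrite !vx_take_drop; try lia.
rewrite (_ : a + i.-1 = (a + i).-1) ?addnS; last lia.
case: (side (a + i)) => [| deg2 | [src rays]]; [lia | by left | right].
split => // y ey y1 y2.
have [q [r sq yq]] := rays y ey y1 y2.
exists q; split => //; rewrite leq_eqVlt in sq; case/orP: sq => [/eqP sq|] //.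
case: (no_junction (a + i)); first lia.
by apply: side_ray_junction g _ ey y1 y2 r yq sq; lia.
Qed.

End Trees.

Section Junctions.
Variables (k d : nat) (V : finType) (e : rel V).
Hypotheses (k_gt0 : 0 < k) (tree : is_tree e) (longest : longest_two_path e d).

Lemma C_gadget_strong D (x : V) p :
  size p = gadget_length k d D -> C_gadget e D x p ->
  exists d', [/\ 1 <= d', d' <= D &
    exists k' (x : V) (p : seq V), k <= k' /\ strong_C_gadget e d' k' x p].
Proof.
elim: D x p => [|D IH] x p sizep hC.
  by have := C_gadget0_size tree longest hC; rewrite sizep ltnn.
pose g := 2 * D.+1 + 1; pose M := gadget_length k d D; pose W := 2 * g + M.
have {}sizep : size p = k * W by [].
case: (classic (forall j, j < k ->
    exists i, j * W + g <= i <= j * W + g + M /\ junction e D.+1 x p i)) =>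
  [all_blocks | no_block].
  have [f hf] := fin_choice_nat all_blocks.
  exists D.+1; split => //; exists k, x, p; split => //.
  apply: (strong_C_gadget_of_junctions (g := g) (f := f) hC k_gt0 _ sizep) =>
    [|j /hf [/andP [lo hi] jun]]; first by rewrite /g; lia.
  by split => //; rewrite mulSn /W; lia.
have [j bad_block] := not_all_ex_not _ _ no_block.
have [jk no_junction] := imply_to_and _ _ bad_block.
have block_in : j * W + g + M <= size p.
  have : j.+1 * W <= k * W by rewrite leq_mul2r jk orbT.
  by rewrite sizep mulSn /W; lia.
have [|d' [d'_gt0 d'_le strong]] :=
  IH _ _ (size_take_drop block_in) (C_gadget_take_drop tree hC block_in _).
  by move=> i lt_i jun; apply: no_junction; exists i; split => //; lia.
by exists d'; split => //; exact: leqW.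
Qed.

End Junctions.

Theorem lemma34 :
  forall k d : nat, 1 <= k -> 1 <= d ->
  exists L : nat, 0 < L /\
    forall (V : finType) (e : rel V),
      is_tree e -> longest_two_path e d ->
      (exists (x : V) (p : seq V), size p = L /\ C_gadget e d x p) ->
      exists d', [/\ 1 <= d', d' <= d &
        exists k' (x : V) (p : seq V), k <= k' /\ strong_C_gadget e d' k' x p].
Proof.
move=> k d k_gt0 _; exists (gadget_length k d d); split.
  by case: d => [|d] //=; rewrite muln_gt0 k_gt0 addn_gt0 muln_gt0.
by move=> V e tree longest [x [p [sizep hC]]]; exact: C_gadget_strong sizep hC.
Qed.
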